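(* Let $Y$ be a $T_1$ topological space with a continuous action of a discrete group $G$ such that the isotropy group of each point is finite, let $\Gamma$ be a finitely generated discrete group, and let $\mathcal G=G\ltimes Y$. Then $\mathcal G^\Gamma$ is isomorphic as a topological groupoid to $G\ltimes\coprod_{\phi\in\mathrm{HOM}(\Gamma,G)}\big(Y^{\langle\phi\rangle},\phi\big)$, where $G$ acts by $g\cdot(y,\phi)=(gy,g\phi g^{-1})$.
   Context: For a topological groupoid $\mathcal G$ (objects $G_0$, arrows $G_1$, isotropy groups $G_x$), $\mathcal S^\Gamma_{\mathcal G}$ is the set of pairs of a point $x\in G_0$ and a homomorphism $\phi_x:\Gamma\to G_x$, topologized with the weak topology induced by the map $\phi_x\mapsto x\in G_0$ and, for each $\gamma\in\Gamma$, the evaluation maps $\phi_x\mapsto\phi_x(\gamma)\in G_1$. $\mathcal G$ acts on $\mathcal S^\Gamma_{\mathcal G}$ by conjugation: for $g\in G_1$ with $s(g)=x$, $g\cdot\phi_x$ is $\gamma\mapsto g\phi_x(\gamma)g^{-1}\in G_{t(g)}$. The $\Gamma$-sector groupoid is the translation groupoid $\mathcal G^\Gamma=\mathcal G\ltimes\mathcal S^\Gamma_{\mathcal G}$. $Y^{\langle\phi\rangle}$ denotes the fixed-point set of $\phi(\Gamma)$ in $Y$ (with the subspace topology), and $(Y^{\langle\phi\rangle},\phi)$ a copy of it labelled by $\phi$. *)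

From Stdlib Require Import List ProofIrrelevance FunctionalExtensionality
  ClassicalEpsilon.
Set Implicit Arguments.
Unset Strict Implicit.

Definition is_topology (X : Type) (op : (X -> Prop) -> Prop) : Prop :=
  op (fun _ => True) /\
  (forall U V, op U -> op V -> op (fun x => U x /\ V x)) /\
  (forall (I : Type) (F : I -> X -> Prop),
      (forall i, op (F i)) -> op (fun x => exists i, F i x)).

Definition gen_top (X : Type) (S : (X -> Prop) -> Prop) : (X -> Prop) -> Prop :=
  fun U => forall P : (X -> Prop) -> Prop,
      is_topology P -> (forall V, S V -> P V) -> P U.

Definition preim_opens (X Y : Type) (opY : (Y -> Prop) -> Prop) (f : X -> Y)
  : (X -> Prop) -> Prop :=
  fun U => exists V, opY V /\ forall x, U x <-> V (f x).

Definition discrete_top (X : Type) : (X -> Prop) -> Prop := fun _ => True.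

Definition prod_top (X Y : Type) (opX : (X -> Prop) -> Prop)
  (opY : (Y -> Prop) -> Prop) : (X * Y -> Prop) -> Prop :=
  gen_top (fun U => preim_opens opX (@fst X Y) U \/ preim_opens opY (@snd X Y) U).

Definition sub_open (Y : Type) (opY : (Y -> Prop) -> Prop) (A W : Y -> Prop)
  : Prop := exists V, opY V /\ forall y, A y -> (W y <-> V y).

Definition continuous (X Y : Type) (opX : (X -> Prop) -> Prop)
  (opY : (Y -> Prop) -> Prop) (f : X -> Y) : Prop :=
  forall V, opY V -> opX (fun x => V (f x)).

Definition homeomorphism (X Y : Type) (opX : (X -> Prop) -> Prop)
  (opY : (Y -> Prop) -> Prop) (f : X -> Y) : Prop :=
  exists g : Y -> X, (forall x, g (f x) = x) /\ (forall y, f (g y) = y) /\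
    continuous opX opY f /\ continuous opY opX g.

Definition T1_space (X : Type) (op : (X -> Prop) -> Prop) : Prop :=
  forall x y : X, x <> y -> exists U, op U /\ U x /\ ~ U y.

(** * Groups (abstract, possibly infinite; viewed as discrete) *)

Record group := Group {
  gcar :> Type;
  gmul : gcar -> gcar -> gcar;
  gone : gcar;
  ginv : gcar -> gcar;
  gmulA : forall a b c, gmul a (gmul b c) = gmul (gmul a b) c;
  gmul1l : forall a, gmul gone a = a;
  gmul1r : forall a, gmul a gone = a;
  gmulVl : forall a, gmul (ginv a) a = gone;
  gmulVr : forall a, gmul a (ginv a) = gone }.

Definition group_hom (A B : group) (f : A -> B) : Prop :=
  forall a b, f (gmul a b) = gmul (f a) (f b).

Inductive generated (G : group) (l : list G) : G -> Prop :=
| gen_in : forall a, In a l -> generated l a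
| gen_one : generated l (gone G)
| gen_mul : forall a b, generated l a -> generated l b -> generated l (gmul a b)
| gen_inv : forall a, generated l a -> generated l (ginv a).

Definition finitely_generated (G : group) : Prop :=
  exists l : list G, forall a, generated l a.

Record group_action (G : group) := GroupAction {
  gsp : Type;
  gsp_top : (gsp -> Prop) -> Prop;
  gact : G -> gsp -> gsp;
  gact1 : forall y, gact (gone G) y = y;
  gactM : forall g h y, gact (gmul g h) y = gact g (gact h y) }.
Arguments gsp {_} _. Arguments gsp_top {_} _ _. Arguments gact {_} _ _ _.

(** * Topological groupoids.
    [cmp g h] is the composite g ∘ h (first h then g), meaningful when
    [src g = tgt h]; it is a total function whose value on non-composable
    pairs is irrelevant. *)

Record groupoid := Groupoid {
  Ob : Type;
  Arr : Type;
  src : Arr -> Ob;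
  tgt : Arr -> Ob;
  idn : Ob -> Arr;
  cmp : Arr -> Arr -> Arr;
  inv : Arr -> Arr;
  src_idn : forall x, src (idn x) = x;
  tgt_idn : forall x, tgt (idn x) = x;
  src_cmp : forall g h, src g = tgt h -> src (cmp g h) = src h;
  tgt_cmp : forall g h, src g = tgt h -> tgt (cmp g h) = tgt g;
  src_inv : forall g, src (inv g) = tgt g;
  tgt_inv : forall g, tgt (inv g) = src g;
  cmpA : forall f g h, src f = tgt g -> src g = tgt h ->
           cmp f (cmp g h) = cmp (cmp f g) h;
  cmp_idn_l : forall g, cmp (idn (tgt g)) g = g;
  cmp_idn_r : forall g, cmp g (idn (src g)) = g;
  cmp_inv_l : forall g, cmp (inv g) g = idn (src g);
  cmp_inv_r : forall g, cmp g (inv g) = idn (tgt g);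
  topOb : (Ob -> Prop) -> Prop;
  topArr : (Arr -> Prop) -> Prop }.

Arguments src {_}. Arguments tgt {_}. Arguments idn {_}.
Arguments topOb : clear implicits. Arguments topArr : clear implicits.
Arguments src_idn : clear implicits. Arguments tgt_idn : clear implicits.
Arguments src_cmp : clear implicits. Arguments tgt_cmp : clear implicits.
Arguments src_inv : clear implicits. Arguments tgt_inv : clear implicits.
Arguments cmpA : clear implicits. Arguments cmp_idn_l : clear implicits.
Arguments cmp_idn_r : clear implicits. Arguments cmp_inv_l : clear implicits.
Arguments cmp_inv_r : clear implicits.
Arguments cmp {_}. Arguments inv {_}.

Definition top_gpd_iso (A B : groupoid) : Prop :=
  exists (F0 : Ob A -> Ob B) (F1 : Arr A -> Arr B),
    homeomorphism (topOb A) (topOb B) F0 /\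
    homeomorphism (topArr A) (topArr B) F1 /\
    (forall g, src (F1 g) = F0 (src g)) /\
    (forall g, tgt (F1 g) = F0 (tgt g)) /\
    (forall x, F1 (idn x) = idn (F0 x)) /\
    (forall g h, src g = tgt h -> F1 (cmp g h) = cmp (F1 g) (F1 h)) /\
    (forall g, F1 (inv g) = inv (F1 g)).

Definition gpd_of_group (G : group) : groupoid.
Proof.
  refine (@Groupoid unit G (fun _ => tt) (fun _ => tt) (fun _ => gone G)
            (@gmul G) (@ginv G) _ _ _ _ _ _ _ _ _ _ _
            (@discrete_top unit) (@discrete_top G)).
  all: intros; repeat match goal with u : unit |- _ => destruct u end;
    try reflexivity.
  - apply gmulA.
  - apply gmul1l.
  - apply gmul1r.
  - apply gmulVl.
  - apply gmulVr.
Defined.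

Record gpd_action (G : groupoid) := GpdAction {
  asp : Type;
  asp_top : (asp -> Prop) -> Prop;
  anchor : asp -> Ob G;
  act : Arr G -> asp -> asp;
  anchor_act : forall g x, src g = anchor x -> anchor (act g x) = tgt g;
  act_idn : forall x, act (idn (anchor x)) x = x;
  act_cmp : forall g h x, src g = tgt h -> src h = anchor x ->
              act (cmp g h) x = act g (act h x) }.

Arguments anchor {_} _ _. Arguments act {_} _ _ _.
Arguments asp {_} _. Arguments asp_top {_} _ _.

Lemma sig_eq (A : Type) (P : A -> Prop) (a b : {x : A | P x}) :
  proj1_sig a = proj1_sig b -> a = b.
Proof.
  destruct a as [a pa], b as [b pb]; simpl; intros ->.
  f_equal; apply proof_irrelevance.
Qed.

(** * Translation groupoid  G ⋉ X  of a groupoid action.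
    Objects: X.  Arrows: pairs (g, x) with s(g) = anchor x, from x to g·x.
    Topology on arrows: subspace of the product G_1 × X. *)

Section Translation.
Variables (G : groupoid) (A : gpd_action G).

Definition tr_Arr : Type := {p : Arr G * asp A | src (fst p) = anchor A (snd p)}.

Definition tr_src (p : tr_Arr) : asp A := snd (proj1_sig p).
Definition tr_tgt (p : tr_Arr) : asp A := act A (fst (proj1_sig p)) (snd (proj1_sig p)).
Definition tr_idn (x : asp A) : tr_Arr :=
  exist _ (idn (anchor A x), x) (src_idn G (anchor A x)).

Definition tr_cmp (p q : tr_Arr) : tr_Arr :=
  match excluded_middle_informative (src (fst (proj1_sig p)) = tgt (fst (proj1_sig q))) with
  | left e =>
      exist _ (cmp (fst (proj1_sig p)) (fst (proj1_sig q)), snd (proj1_sig q))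
        (eq_trans (src_cmp G _ _ e) (proj2_sig q))
  | right _ => q
  end.

Lemma tr_inv_pf (p : tr_Arr) :
  src (inv (fst (proj1_sig p))) = anchor A (act A (fst (proj1_sig p)) (snd (proj1_sig p))).
Proof.
  rewrite (src_inv G). symmetry. apply anchor_act. exact (proj2_sig p).
Qed.

Definition tr_inv (p : tr_Arr) : tr_Arr :=
  exist _ (inv (fst (proj1_sig p)), act A (fst (proj1_sig p)) (snd (proj1_sig p)))
    (tr_inv_pf p).

Lemma tr_cmp_val (p q : tr_Arr) :
  src (fst (proj1_sig p)) = tgt (fst (proj1_sig q)) ->
  proj1_sig (tr_cmp p q) = (cmp (fst (proj1_sig p)) (fst (proj1_sig q)), snd (proj1_sig q)).
Proof.
  intro e. unfold tr_cmp.
  destruct (excluded_middle_informative _) as [e'|n]; [reflexivity|contradiction].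
Qed.

Lemma tr_comp_ok (p q : tr_Arr) : tr_src p = tr_tgt q ->
  src (fst (proj1_sig p)) = tgt (fst (proj1_sig q)).
Proof.
  destruct p as [[g x] hp], q as [[h y] hq]; unfold tr_src, tr_tgt; simpl in *.
  intros ->. rewrite hp. apply anchor_act. exact hq.
Qed.

Lemma tr_src_idn x : tr_src (tr_idn x) = x.
Proof. reflexivity. Qed.

Lemma tr_tgt_idn x : tr_tgt (tr_idn x) = x.
Proof. apply act_idn. Qed.

Lemma tr_src_cmp p q : tr_src p = tr_tgt q -> tr_src (tr_cmp p q) = tr_src q.
Proof. intro e. unfold tr_src. rewrite tr_cmp_val by (apply tr_comp_ok; exact e). reflexivity. Qed.

Lemma tr_tgt_cmp p q : tr_src p = tr_tgt q -> tr_tgt (tr_cmp p q) = tr_tgt p.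
Proof.
  intro e. pose proof (tr_comp_ok e) as c. unfold tr_tgt at 1.
  rewrite tr_cmp_val by exact c. simpl.
  rewrite act_cmp by (exact c || exact (proj2_sig q)).
  unfold tr_tgt, tr_src in *. rewrite <- e. reflexivity.
Qed.

Lemma tr_src_inv p : tr_src (tr_inv p) = tr_tgt p.
Proof. reflexivity. Qed.

Lemma tr_tgt_inv p : tr_tgt (tr_inv p) = tr_src p.
Proof.
  destruct p as [[g x] hp]; unfold tr_tgt, tr_src, tr_inv; simpl in *.
  rewrite <- act_cmp.
  - rewrite (cmp_inv_l G), hp. apply act_idn.
  - apply src_inv.
  - exact hp.
Qed.

Lemma tr_cmpA f g h : tr_src f = tr_tgt g -> tr_src g = tr_tgt h ->
  tr_cmp f (tr_cmp g h) = tr_cmp (tr_cmp f g) h.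
Proof.
  intros e1 e2. pose proof (tr_comp_ok e1) as c1. pose proof (tr_comp_ok e2) as c2.
  apply sig_eq.
  assert (c3 : src (fst (proj1_sig f)) = tgt (fst (proj1_sig (tr_cmp g h)))).
  { rewrite tr_cmp_val by exact c2. simpl. rewrite (tgt_cmp G) by exact c2. exact c1. }
  assert (c4 : src (fst (proj1_sig (tr_cmp f g))) = tgt (fst (proj1_sig h))).
  { rewrite tr_cmp_val by exact c1. simpl. rewrite (src_cmp G) by exact c1. exact c2. }
  rewrite (tr_cmp_val c3), (tr_cmp_val c4).
  rewrite (tr_cmp_val c2), (tr_cmp_val c1). simpl.
  rewrite (cmpA G) by (exact c1 || exact c2). reflexivity.
Qed.

Lemma tr_cmp_idn_l p : tr_cmp (tr_idn (tr_tgt p)) p = p.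
Proof.
  destruct p as [[g x] hp]; simpl in hp. apply sig_eq.
  assert (e : anchor A (act A g x) = tgt g) by (apply anchor_act; exact hp).
  rewrite tr_cmp_val.
  - simpl. unfold tr_tgt; simpl. rewrite e, (cmp_idn_l G). reflexivity.
  - simpl. unfold tr_tgt; simpl. rewrite (src_idn G). exact e.
Qed.

Lemma tr_cmp_idn_r p : tr_cmp p (tr_idn (tr_src p)) = p.
Proof.
  destruct p as [[g x] hp]; simpl in hp. apply sig_eq.
  rewrite tr_cmp_val.
  - simpl. unfold tr_src; simpl. rewrite <- hp, (cmp_idn_r G). reflexivity.
  - simpl. unfold tr_src; simpl. rewrite (tgt_idn G). exact hp.
Qed.

Lemma tr_cmp_inv_l p : tr_cmp (tr_inv p) p = tr_idn (tr_src p).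
Proof.
  destruct p as [[g x] hp]; simpl in hp. apply sig_eq.
  rewrite tr_cmp_val.
  - simpl. unfold tr_src; simpl. rewrite (cmp_inv_l G), hp. reflexivity.
  - simpl. apply src_inv.
Qed.

Lemma tr_cmp_inv_r p : tr_cmp p (tr_inv p) = tr_idn (tr_tgt p).
Proof.
  destruct p as [[g x] hp]; simpl in hp. apply sig_eq.
  assert (e : anchor A (act A g x) = tgt g) by (apply anchor_act; exact hp).
  rewrite tr_cmp_val.
  - simpl. unfold tr_tgt; simpl. rewrite (cmp_inv_r G), e. reflexivity.
  - simpl. symmetry. apply tgt_inv.
Qed.

Definition tr_topArr : (tr_Arr -> Prop) -> Prop :=
  gen_top (fun U => preim_opens (topArr G) (fun p : tr_Arr => fst (proj1_sig p)) U
                 \/ preim_opens (asp_top A) (fun p : tr_Arr => snd (proj1_sig p)) U).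

Definition translation_gpd : groupoid :=
  @Groupoid (asp A) tr_Arr tr_src tr_tgt tr_idn tr_cmp tr_inv
    tr_src_idn tr_tgt_idn tr_src_cmp tr_tgt_cmp tr_src_inv tr_tgt_inv
    tr_cmpA tr_cmp_idn_l tr_cmp_idn_r tr_cmp_inv_l tr_cmp_inv_r
    (asp_top A) tr_topArr.

End Translation.

Definition gpd_action_of_group_action (G : group) (Y : group_action G)
  : gpd_action (gpd_of_group G).
Proof.
  refine (@GpdAction (gpd_of_group G) (gsp Y) (gsp_top Y) (fun _ => tt)
            (gact Y) _ _ _).
  - intros; reflexivity.
  - intros; apply gact1.
  - intros; apply gactM.
Defined.

Definition action_gpd (G : group) (Y : group_action G) : groupoid :=
  translation_gpd (gpd_action_of_group_action Y).

Ltac st G :=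
  repeat (first [ rewrite (src_inv G) | rewrite (tgt_inv G)
                | rewrite (src_idn G) | rewrite (tgt_idn G)
                | rewrite (src_cmp G) by (st G) | rewrite (tgt_cmp G) by (st G) ]);
  congruence.

Lemma gpd_inv_idn (G : groupoid) (x : Ob G) : inv (idn x) = idn x.
Proof.
  rewrite <- (cmp_idn_r G (inv (idn x))). rewrite (src_inv G), (tgt_idn G).
  rewrite (cmp_inv_l G (idn x)).
  rewrite (src_idn G). reflexivity.
Qed.

Lemma gpd_cancel (G : groupoid) (X g : Arr G) : src X = src g ->
  cmp (cmp X (inv g)) g = X.
Proof.
  intro e. rewrite <- (cmpA G) by st G. rewrite (cmp_inv_l G), <- e.
  apply (cmp_idn_r G).
Qed.

Lemma gpd_inv_cmp (G : groupoid) (g h : Arr G) : src g = tgt h ->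
  inv (cmp g h) = cmp (inv h) (inv g).
Proof.
  intro e.
  (* inv (gh) = inv(gh) ∘ (g h ∘ h^-1 g^-1) *)
  assert (Hk : cmp (cmp g h) (cmp (inv h) (inv g)) = idn (tgt g)).
  { rewrite (cmpA G) by st G. rewrite <- ((cmpA G) g h) by st G.
    rewrite (cmp_inv_r G), <- e, (cmp_idn_r G). apply (cmp_inv_r G). }
  transitivity (cmp (inv (cmp g h)) (cmp (cmp g h) (cmp (inv h) (inv g)))).
  - rewrite Hk. rewrite <- (tgt_cmp G g h) by exact e.
    rewrite <- (src_inv G). symmetry. apply (cmp_idn_r G).
  - rewrite (cmpA G) by st G. rewrite (cmp_inv_l G).
    rewrite (src_cmp G) by exact e.
    rewrite <- (tgt_inv G h). rewrite <- (tgt_cmp G (inv h) (inv g)) by st G.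
    apply (cmp_idn_l G).
Qed.

(** * The Gamma-sector space S^Γ_G and the sector groupoid G^Γ *)

Section Sector.
Variables (G : groupoid) (Gam : group).

(** phi : Γ -> G_1 is a homomorphism Γ -> G_x (the isotropy group at x) *)
Definition is_sector (x : Ob G) (phi : Gam -> Arr G) : Prop :=
  (forall c, src (phi c) = x /\ tgt (phi c) = x) /\
  (forall c d, phi (gmul c d) = cmp (phi c) (phi d)).

Definition sector_sp : Type := {p : Ob G * (Gam -> Arr G) | is_sector (fst p) (snd p)}.

Definition sector_top : (sector_sp -> Prop) -> Prop :=
  gen_top (fun U => preim_opens (topOb G) (fun p : sector_sp => fst (proj1_sig p)) U
                 \/ exists c : Gam,
                      preim_opens (topArr G) (fun p : sector_sp => snd (proj1_sig p) c) U).

Definition conj_hom (g : Arr G) (phi : Gam -> Arr G) : Gam -> Arr G :=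
  fun c => cmp (cmp g (phi c)) (inv g).

Lemma conj_hom_sector (g : Arr G) x phi : src g = x -> is_sector x phi ->
  is_sector (tgt g) (conj_hom g phi).
Proof.
  intros e [H1 H2]. split.
  - intro c. destruct (H1 c) as [a1 a2]. unfold conj_hom. split; st G.
  - intros c d. unfold conj_hom. rewrite H2.
    destruct (H1 c) as [a1 a2]. destruct (H1 d) as [b1 b2].
    rewrite ((cmpA G) (cmp (cmp g (phi c)) (inv g))) by st G.
    rewrite ((cmpA G) (cmp (cmp g (phi c)) (inv g)) g) by st G.
    rewrite gpd_cancel by st G.
    rewrite ((cmpA G) g (phi c)) by st G. reflexivity.
Qed.

Definition sector_act (g : Arr G) (p : sector_sp) : sector_sp :=
  match excluded_middle_informative (src g = fst (proj1_sig p)) with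
  | left e => exist _ (tgt g, conj_hom g (snd (proj1_sig p)))
                (conj_hom_sector e (proj2_sig p))
  | right _ => p
  end.

Lemma sector_act_val g p : src g = fst (proj1_sig p) ->
  proj1_sig (sector_act g p) = (tgt g, conj_hom g (snd (proj1_sig p))).
Proof.
  intro e. unfold sector_act.
  destruct (excluded_middle_informative _); [reflexivity|contradiction].
Qed.

Lemma sector_anchor_act g p : src g = fst (proj1_sig p) ->
  fst (proj1_sig (sector_act g p)) = tgt g.
Proof. intro e. rewrite sector_act_val by exact e. reflexivity. Qed.

Lemma sector_act_idn p : sector_act (idn (fst (proj1_sig p))) p = p.
Proof.
  apply sig_eq. rewrite sector_act_val by apply (src_idn G).
  destruct p as [[x phi] [H1 H2]]; simpl in *. rewrite (tgt_idn G). f_equal.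
  apply functional_extensionality; intro c. unfold conj_hom.
  destruct (H1 c) as [a1 a2].
  rewrite gpd_inv_idn. rewrite <- a2 at 1. rewrite (cmp_idn_l G).
  rewrite <- a1. apply (cmp_idn_r G).
Qed.

Lemma sector_act_cmp g h p : src g = tgt h -> src h = fst (proj1_sig p) ->
  sector_act (cmp g h) p = sector_act g (sector_act h p).
Proof.
  intros e1 e2. apply sig_eq.
  rewrite sector_act_val by (rewrite (src_cmp G) by exact e1; exact e2).
  rewrite sector_act_val by (rewrite sector_anchor_act by exact e2; exact e1).
  rewrite sector_act_val by exact e2. simpl.
  rewrite (tgt_cmp G) by exact e1. f_equal.
  apply functional_extensionality; intro c. unfold conj_hom.
  destruct p as [[x phi] [H1 H2]]; simpl in *.
  destruct (H1 c) as [a1 a2].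
  rewrite gpd_inv_cmp by exact e1.
  rewrite ((cmpA G) (cmp (cmp g h) (phi c))) by st G.
  rewrite ((cmpA G) g (cmp h (phi c)) (inv h)) by st G.
  rewrite ((cmpA G) g h (phi c)) by st G. reflexivity.
Qed.

Definition sector_action : gpd_action G :=
  @GpdAction G sector_sp sector_top (fun p => fst (proj1_sig p)) sector_act
    sector_anchor_act sector_act_idn sector_act_cmp.

Definition sector_gpd : groupoid := translation_gpd sector_action.

End Sector.

(** * The space  ∐_{φ ∈ HOM(Γ,G)} (Y^⟨φ⟩, φ)  with the action
      g·(y, φ) = (g y, g φ g^-1) *)

Lemma ginv_one (G : group) : ginv (gone G) = gone G.
Proof. rewrite <- (gmul1r (ginv (gone G))). apply gmulVl. Qed.

Lemma ginv_mul (G : group) (a b : G) : ginv (gmul a b) = gmul (ginv b) (ginv a).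
Proof.
  rewrite <- (gmul1l (ginv (gmul a b))).
  assert (E : gmul (gmul (ginv b) (ginv a)) (gmul a b) = gone G).
  { rewrite gmulA. rewrite <- (gmulA (ginv b) (ginv a) a), gmulVl, gmul1r.
    apply gmulVl. }
  rewrite <- E, <- gmulA, gmulVr. apply gmul1r.
Qed.

Section Coprod.
Variables (Gam G : group) (Y : group_action G).

Definition fixed_by (phi : Gam -> G) (y : gsp Y) : Prop :=
  forall c, gact Y (phi c) y = y.

Definition coprod_sp : Type :=
  {p : (Gam -> G) * gsp Y | group_hom (fst p) /\ fixed_by (fst p) (snd p)}.

(** disjoint-union topology: U is open iff for every φ ∈ HOM(Γ,G) its
    φ-summand is open in the subspace Y^⟨φ⟩ of Y *)
Definition coprod_top : (coprod_sp -> Prop) -> Prop :=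
  fun U => forall phi : Gam -> G, forall hphi : group_hom phi,
    sub_open (gsp_top Y) (fixed_by phi)
      (fun y => exists hy : fixed_by phi y, U (exist _ (phi, y) (conj hphi hy))).

Definition conj_grp (g : G) (phi : Gam -> G) : Gam -> G :=
  fun c => gmul (gmul g (phi c)) (ginv g).

Lemma conj_grp_ok g phi y : group_hom phi /\ fixed_by phi y ->
  group_hom (conj_grp g phi) /\ fixed_by (conj_grp g phi) (gact Y g y).
Proof.
  intros [H1 H2]. split.
  - intros c d. unfold conj_grp. rewrite H1.
    rewrite !gmulA. rewrite <- (gmulA (gmul g (phi c)) (ginv g) g), gmulVl, gmul1r.
    reflexivity.
  - intro c. unfold conj_grp. rewrite !gactM.
    rewrite <- (gactM (ginv g) g), gmulVl, gact1. f_equal. apply H2.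
Qed.

Definition coprod_act (g : G) (p : coprod_sp) : coprod_sp :=
  exist _ (conj_grp g (fst (proj1_sig p)), gact Y g (snd (proj1_sig p)))
    (conj_grp_ok g (proj2_sig p)).

Lemma coprod_act1 p : coprod_act (gone G) p = p.
Proof.
  apply sig_eq. destruct p as [[phi y] h]; simpl. rewrite gact1. f_equal.
  apply functional_extensionality; intro c. unfold conj_grp.
  rewrite ginv_one, gmul1r. apply gmul1l.
Qed.

Lemma coprod_actM g h p : coprod_act (gmul g h) p = coprod_act g (coprod_act h p).
Proof.
  apply sig_eq. destruct p as [[phi y] hp]; simpl. rewrite gactM. f_equal.
  apply functional_extensionality; intro c. unfold conj_grp.
  rewrite ginv_mul. rewrite !gmulA. reflexivity.
Qed.

Definition coprod_action : group_action G :=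
  @GroupAction G coprod_sp coprod_top coprod_act coprod_act1 coprod_actM.

End Coprod.

(* A point of the sector space S^Γ of G ⋉ Y is a point y together with a
   homomorphism Γ -> (G ⋉ Y)_y; every arrow of G ⋉ Y based at y is a pair
   (g, y), and it is a loop exactly when g fixes y.  Hence such a point is
   the same thing as a homomorphism φ : Γ -> G together with a point y of
   the fixed set Y^⟨φ⟩, and conjugation by an arrow (g, y) becomes
   (φ, y) ↦ (gφg⁻¹, gy).  This bijection  to_coprod  between S^Γ and
   ∐_φ (Y^⟨φ⟩, φ) is therefore equivariant, and it is a homeomorphism:
   - its inverse is continuous because every subbasic open set of S^Γ
     pulls back to a set that, on each summand, is open in Y;
   - it is continuous because Γ is finitely generated: the set of sectors
     whose homomorphism is a given φ is cut out by finitely many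
     conditions φ(c) = g on generators c, each open since G is discrete. *)

From Stdlib Require Import List ProofIrrelevance FunctionalExtensionality
  PropExtensionality.
Set Implicit Arguments.
Unset Strict Implicit.

Section Topology.
Variable X : Type.

Lemma open_ext (op : (X -> Prop) -> Prop) (U V : X -> Prop) :
  op U -> (forall x, U x <-> V x) -> op V.
Proof.
  intros HU E. replace V with U; [exact HU|].
  apply functional_extensionality; intro x. apply propositional_extensionality, E.
Qed.

Lemma gen_top_sub (S : (X -> Prop) -> Prop) (V : X -> Prop) : S V -> gen_top S V.
Proof. intros HV P _ HS. exact (HS V HV). Qed.

Lemma gen_top_is_topology (S : (X -> Prop) -> Prop) : is_topology (gen_top S).
Proof.
  split; [|split].
  - intros P HP _. apply HP.
  - intros U V HU HV P HP HS. apply HP; [apply HU|apply HV]; assumption.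
  - intros I F HF P HP HS. apply HP. intro i. apply HF; assumption.
Qed.

Lemma continuous_into_gen (Z : Type) (opX : (X -> Prop) -> Prop)
  (S : (Z -> Prop) -> Prop) (f : X -> Z) :
  is_topology opX -> (forall V, S V -> opX (fun x => V (f x))) ->
  continuous opX (gen_top S) f.
Proof.
  intros [Htop [Hand Hunion]] HS V HV.
  apply (HV (fun V => opX (fun x => V (f x)))); [|exact HS].
  split; [exact Htop|split].
  - intros A B. apply Hand.
  - intros J F. apply Hunion.
Qed.

Lemma const_open (op : (X -> Prop) -> Prop) (P : Prop) :
  is_topology op -> op (fun _ => P).
Proof.
  intros [Htop [_ Hunion]].
  apply open_ext with (fun x : X => exists _ : P, True).
  - apply (Hunion P (fun _ _ => True)). intros; exact Htop.
  - intro x. split; [intros [h _]; exact h | intro h; exists h; exact I].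
Qed.

Lemma open_forall_list (A : Type) (op : (X -> Prop) -> Prop)
  (P : A -> X -> Prop) (l : list A) :
  is_topology op -> (forall a, op (P a)) -> op (fun x => forall a, In a l -> P a x).
Proof.
  intros Hop HP. pose proof Hop as [Htop [Hand _]].
  induction l as [|a l IH].
  - apply open_ext with (fun _ => True); [exact Htop|].
    intro x. split; [intros _ c []|intros _; exact I].
  - apply open_ext with (fun x => P a x /\ forall c, In c l -> P c x).
    + apply Hand; [apply HP|exact IH].
    + intro x. split.
      * intros [h1 h2] c [<-|hc]; [exact h1|exact (h2 c hc)].
      * intro h. split; [apply h; left; reflexivity|intros c hc; apply h; right; exact hc].
Qed.

Lemma open_of_local (op : (X -> Prop) -> Prop) (U : X -> Prop) :
  is_topology op ->
  (forall x, U x -> exists V, op V /\ V x /\ forall z, V z -> U z) -> op U.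
Proof.
  intros [_ [_ Hunion]] Hloc.
  set (J := {V : X -> Prop | op V /\ forall z, V z -> U z}).
  apply open_ext with (fun x => exists j : J, proj1_sig j x).
  - apply Hunion. intro j. exact (proj1 (proj2_sig j)).
  - intro x. split.
    + intros [j Vx]. exact (proj2 (proj2_sig j) x Vx).
    + intro Ux. destruct (Hloc x Ux) as [V [HV [Vx HVU]]].
      exists (exist _ V (conj HV HVU)). exact Vx.
Qed.

End Topology.

Section GroupHom.
Variables (A B : group) (f : A -> B).
Hypothesis f_hom : group_hom f.

Lemma hom_one : f (gone A) = gone B.
Proof.
  assert (E : f (gone A) = gmul (f (gone A)) (f (gone A))).
  { rewrite <- f_hom, gmul1l. reflexivity. }
  rewrite <- (gmul1l (f (gone A))) at 1. rewrite <- (gmulVl (f (gone A))) at 1.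
  rewrite <- gmulA, <- E. apply gmulVl.
Qed.

Lemma hom_inv (a : A) : f (ginv a) = ginv (f a).
Proof.
  rewrite <- (gmul1r (f (ginv a))), <- (gmulVr (f a)).
  rewrite gmulA, <- f_hom, gmulVl, hom_one. apply gmul1l.
Qed.

End GroupHom.

Lemma hom_agree_generated (A B : group) (f g : A -> B) (l : list A) :
  group_hom f -> group_hom g -> (forall c, In c l -> f c = g c) ->
  forall a, generated l a -> f a = g a.
Proof.
  intros Hf Hg E a Ha. induction Ha as [a Ha| |a b _ IHa _ IHb|a _ IHa].
  - exact (E a Ha).
  - rewrite !hom_one by assumption. reflexivity.
  - rewrite Hf, Hg, IHa, IHb. reflexivity.
  - rewrite !hom_inv by assumption. rewrite IHa. reflexivity.
Qed.

Section TranslationTopology.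
Variables (G : groupoid) (A : gpd_action G).

Lemma tr_open_arrow (V : Arr G -> Prop) :
  topArr G V -> tr_topArr (A:=A) (fun a => V (fst (proj1_sig a))).
Proof.
  intro HV. apply gen_top_sub. left. exists V. split; [exact HV|]. intro; reflexivity.
Qed.

Lemma tr_open_point (W : asp A -> Prop) :
  asp_top A W -> tr_topArr (A:=A) (fun a => W (snd (proj1_sig a))).
Proof.
  intro HW. apply gen_top_sub. right. exists W. split; [exact HW|]. intro; reflexivity.
Qed.

Lemma continuous_into_tr_arr (X : Type) (opX : (X -> Prop) -> Prop)
  (f : X -> tr_Arr A) :
  is_topology opX ->
  (forall V, topArr G V -> opX (fun x => V (fst (proj1_sig (f x))))) ->
  (forall W, asp_top A W -> opX (fun x => W (snd (proj1_sig (f x))))) ->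
  continuous opX (@tr_topArr G A) f.
Proof.
  intros HX Hfst Hsnd. apply continuous_into_gen; [exact HX|].
  intros V [[V0 [o e]] | [W [o e]]].
  - apply open_ext with (fun x => V0 (fst (proj1_sig (f x)))); [exact (Hfst V0 o)|].
    intro x. symmetry. apply e.
  - apply open_ext with (fun x => W (snd (proj1_sig (f x)))); [exact (Hsnd W o)|].
    intro x. symmetry. apply e.
Qed.

End TranslationTopology.

Section ActionGroupoid.
Variables (G : group) (Y : group_action G).

Definition mk_arr (g : G) (y : gsp Y) : Arr (action_gpd Y) := exist _ (g, y) eq_refl.

Lemma action_cmp_val (a b : Arr (action_gpd Y)) :
  proj1_sig (cmp a b) = (gmul (fst (proj1_sig a)) (fst (proj1_sig b)), snd (proj1_sig b)).
Proof. exact (@tr_cmp_val _ (gpd_action_of_group_action Y) a b eq_refl). Qed.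

(** Since G is discrete, any condition on the group part of an arrow is open. *)
Lemma action_open_group (U : G -> Prop) :
  topArr (action_gpd Y) (fun a => U (fst (proj1_sig a))).
Proof. exact (@tr_open_arrow (gpd_of_group G) (gpd_action_of_group_action Y) U I). Qed.

End ActionGroupoid.

Section Sector.
Variables (G : group) (Y : group_action G) (Gam : group).

Local Notation GY := (action_gpd Y).
Local Notation SGam := (sector_sp GY Gam).
Local Notation Coprod := (coprod_sp Gam Y).

Lemma coprod_top_is_topology :
  is_topology (gsp_top Y) -> is_topology (@coprod_top Gam G Y).
Proof.
  intros HY. pose proof HY as [Htop [Hand Hunion]]. split; [|split].
  - intros phi hphi. exists (fun _ => True). split; [exact Htop|].
    intros y hy. split; [intros _; exact I|intros _; exists hy; exact I].
  - intros U V HU HV phi hphi.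
    destruct (HU phi hphi) as [WU [oU eU]], (HV phi hphi) as [WV [oV eV]].
    exists (fun y => WU y /\ WV y). split; [apply Hand; assumption|].
    intros y hy. rewrite <- (eU y hy), <- (eV y hy). split.
    + intros [h [u v]]. split; exists h; assumption.
    + intros [[h1 u] [h2 v]]. exists h1. split; [exact u|].
      replace h1 with h2 by apply proof_irrelevance. exact v.
  - intros J F HF phi hphi.
    set (K := {jW : J * (gsp Y -> Prop) | gsp_top Y (snd jW) /\ forall y, fixed_by phi y ->
               ((exists hy, F (fst jW) (exist _ (phi, y) (conj hphi hy))) <-> snd jW y)}).
    exists (fun y => exists k : K, snd (proj1_sig k) y). split.
    + apply (Hunion K (fun k => snd (proj1_sig k))). intro k. exact (proj1 (proj2_sig k)).
    + intros y hy. split.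
      * intros [hy' [j Fj]]. destruct (HF j phi hphi) as [W [o e]].
        exists (exist _ (j, W) (conj o e)). apply e; [exact hy|]. exists hy'. exact Fj.
      * intros [[[j W] [o e]] Wy]. simpl in *. apply e in Wy; [|exact hy].
        destruct Wy as [hy' Fj]. exists hy', j. exact Fj.
Qed.

Lemma coprod_open_point (W : gsp Y -> Prop) :
  gsp_top Y W -> @coprod_top Gam G Y (fun q => W (snd (proj1_sig q))).
Proof.
  intros o phi hphi. exists W. split; [exact o|].
  intros y hy. split; [intros [hy' w]; exact w|intro w; exists hy; exact w].
Qed.

(** Any union of summands is open: HOM(Γ, G) carries the discrete topology. *)
Lemma coprod_open_hom (P : (Gam -> G) -> Prop) :
  is_topology (gsp_top Y) -> @coprod_top Gam G Y (fun q => P (fst (proj1_sig q))).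
Proof.
  intros HY phi hphi. exists (fun _ => P phi). split; [exact (const_open _ HY)|].
  intros y hy. split; [intros [hy' w]; exact w|intro w; exists hy; exact w].
Qed.

Lemma coprod_open_on_summand (V : Coprod -> Prop) (q : Coprod) :
  coprod_top V -> exists W, gsp_top Y W /\
    forall q', fst (proj1_sig q') = fst (proj1_sig q) -> (V q' <-> W (snd (proj1_sig q'))).
Proof.
  intro HV. destruct q as [[phi y] [hphi hy]]; simpl.
  destruct (HV phi hphi) as [W [o e]]. exists W. split; [exact o|].
  intros [[phi' y'] [hphi' hy']] E; simpl in E |- *. subst phi'.
  rewrite <- (e y' hy'). replace hphi' with hphi by apply proof_irrelevance. split.
  - intro v. exists hy'. exact v.
  - intros [hy'' v]. replace hy' with hy'' by apply proof_irrelevance. exact v.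
Qed.

(** * The sector space of  G ⋉ Y
    A sector at y is  c ↦ (φ c, y)  with φ a homomorphism fixing y. *)

Definition sector_hom (p : SGam) (c : Gam) : G := fst (proj1_sig (snd (proj1_sig p) c)).
Definition sector_point (p : SGam) : gsp Y := fst (proj1_sig p).

Lemma sector_arrow_eq (p : SGam) (c : Gam) :
  snd (proj1_sig p) c = mk_arr (sector_hom p c) (sector_point p).
Proof.
  pose proof (proj1 (proj1 (proj2_sig p) c)) as Hsrc. revert Hsrc.
  unfold sector_hom, sector_point. generalize (snd (proj1_sig p) c).
  intros [[g y'] e] Hsrc. apply sig_eq. simpl in *. unfold tr_src in Hsrc.
  simpl in Hsrc. subst. reflexivity.
Qed.

(** Composition in  G ⋉ Y  multiplies group parts, so φ is a homomorphism. *)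
Lemma sector_hom_is_hom (p : SGam) : group_hom (sector_hom p).
Proof.
  intros c d. unfold sector_hom. rewrite (proj2 (proj2_sig p)).
  rewrite action_cmp_val. reflexivity.
Qed.

Lemma sector_hom_fixes (p : SGam) : fixed_by (sector_hom p) (sector_point p).
Proof.
  intro c. pose proof (proj2 (proj1 (proj2_sig p) c)) as Htgt.
  rewrite sector_arrow_eq in Htgt. exact Htgt.
Qed.

Definition to_coprod (p : SGam) : Coprod :=
  exist _ (sector_hom p, sector_point p) (conj (sector_hom_is_hom p) (sector_hom_fixes p)).

Definition coprod_sector (q : Coprod) (c : Gam) : Arr GY :=
  mk_arr (fst (proj1_sig q) c) (snd (proj1_sig q)).

Lemma coprod_sector_is_sector (q : Coprod) :
  is_sector (G:=GY) (snd (proj1_sig q)) (coprod_sector q).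
Proof.
  destruct q as [[phi y] [hphi hy]]. split.
  - intro c. split; [reflexivity|]. exact (hy c).
  - intros c d. apply sig_eq. rewrite action_cmp_val. simpl. rewrite hphi. reflexivity.
Qed.

Definition of_coprod (q : Coprod) : SGam :=
  exist _ (snd (proj1_sig q), coprod_sector q) (coprod_sector_is_sector q).

Lemma to_of_coprod (q : Coprod) : to_coprod (of_coprod q) = q.
Proof. apply sig_eq. destruct q as [[phi y] h]. reflexivity. Qed.

Lemma of_to_coprod (p : SGam) : of_coprod (to_coprod p) = p.
Proof.
  apply sig_eq. rewrite (surjective_pairing (proj1_sig p)). simpl. f_equal.
  apply functional_extensionality; intro c. symmetry. exact (sector_arrow_eq p c).
Qed.

Lemma to_coprod_equivariant (a : Arr GY) (p : SGam) :
  src a = sector_point p ->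
  to_coprod (sector_act a p) = coprod_act (fst (proj1_sig a)) (to_coprod p).
Proof.
  intro e. apply sig_eq. simpl. unfold sector_hom, sector_point.
  rewrite (sector_act_val e). cbn [fst snd]. f_equal.
  - apply functional_extensionality; intro c.
    unfold conj_hom, conj_grp. rewrite !action_cmp_val. reflexivity.
  - destruct a as [[g y] ea]. simpl in e |- *. unfold tr_src in e. simpl in e.
    unfold tr_tgt. simpl. rewrite e. reflexivity.
Qed.

Lemma sector_open_agree (phi : Gam -> G) (l : list Gam) :
  sector_top (fun p : SGam => forall c, In c l -> sector_hom p c = phi c).
Proof.
  apply open_forall_list; [apply gen_top_is_topology|]. intro c.
  apply gen_top_sub. right. exists c.
  exists (fun a : Arr GY => fst (proj1_sig a) = phi c).
  split; [exact (@action_open_group G Y (fun g => g = phi c))|]. intro p; reflexivity.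
Qed.

Lemma sector_open_point (W : gsp Y -> Prop) :
  gsp_top Y W -> sector_top (fun p : SGam => W (sector_point p)).
Proof.
  intro o. apply gen_top_sub. left. exists W. split; [exact o|]. intro; reflexivity.
Qed.

(** Near a sector p, the sectors with the same homomorphism on the
    generators have the same homomorphism, so they stay in p's summand. *)
Lemma to_coprod_continuous :
  finitely_generated Gam -> continuous (@sector_top GY Gam) (@coprod_top Gam G Y) to_coprod.
Proof.
  intros [l Hl] V HV. apply open_of_local; [apply gen_top_is_topology|].
  intros p Vp. destruct (coprod_open_on_summand (to_coprod p) HV) as [W [o HW]].
  exists (fun p' => (forall c, In c l -> sector_hom p' c = sector_hom p c) /\
                   W (sector_point p')).
  split; [|split].
  - apply (gen_top_is_topology _); [apply sector_open_agree|apply sector_open_point, o].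
  - split; [reflexivity|]. exact (proj1 (HW (to_coprod p) eq_refl) Vp).
  - intros p' [Hagree Wp']. apply (HW (to_coprod p')); [|exact Wp'].
    apply functional_extensionality; intro a.
    exact (hom_agree_generated (sector_hom_is_hom p') (sector_hom_is_hom p) Hagree (Hl a)).
Qed.

(** Subbasic opens of S^Γ pull back to sets depending on the point and on
    a value φ(c), both open in the coproduct. *)
Lemma of_coprod_continuous :
  is_topology (gsp_top Y) -> continuous (@coprod_top Gam G Y) (@sector_top GY Gam) of_coprod.
Proof.
  intros HY. apply continuous_into_gen; [exact (coprod_top_is_topology HY)|].
  intros V [[W [o e]] | [c [W [o e]]]].
  - apply open_ext with (fun q => W (snd (proj1_sig q))); [exact (coprod_open_point o)|].
    intro q. symmetry. apply e.
  - apply open_ext with (fun q => W (coprod_sector q c)).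
    + apply (continuous_into_tr_arr (coprod_top_is_topology HY)); [| |exact o].
      * intros U _. exact (coprod_open_hom (fun phi => U (phi c)) HY).
      * intros W' o'. exact (coprod_open_point o').
    + intro q. symmetry. apply e.
Qed.

Lemma to_coprod_homeomorphism :
  is_topology (gsp_top Y) -> finitely_generated Gam ->
  homeomorphism (@sector_top GY Gam) (@coprod_top Gam G Y) to_coprod.
Proof.
  intros HY fg. exists of_coprod.
  split; [exact of_to_coprod|split; [exact to_of_coprod|split]].
  - exact (to_coprod_continuous fg).
  - exact (of_coprod_continuous HY).
Qed.

Local Notation SecArr := (Arr (sector_gpd GY Gam)).
Local Notation CopArr := (Arr (action_gpd (coprod_action Gam Y))).

Definition to_coprod_arr (a : SecArr) : CopArr :=
  exist _ (fst (proj1_sig (fst (proj1_sig a))), to_coprod (snd (proj1_sig a))) eq_refl.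

Definition of_coprod_arr (b : CopArr) : SecArr :=
  exist _ (mk_arr (fst (proj1_sig b)) (snd (proj1_sig (snd (proj1_sig b)))),
           of_coprod (snd (proj1_sig b))) eq_refl.

Lemma of_to_coprod_arr (a : SecArr) : of_coprod_arr (to_coprod_arr a) = a.
Proof.
  apply sig_eq. destruct a as [[[[g y] ea] p] e]. simpl. rewrite of_to_coprod. f_equal.
  simpl in e. unfold tr_src in e. simpl in e. subst. apply sig_eq. reflexivity.
Qed.

Lemma to_of_coprod_arr (b : CopArr) : to_coprod_arr (of_coprod_arr b) = b.
Proof. apply sig_eq. destruct b as [[g q] e]. simpl. rewrite to_of_coprod. reflexivity. Qed.

Lemma to_coprod_arr_tgt (a : SecArr) : tgt (to_coprod_arr a) = to_coprod (tgt a).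
Proof.
  destruct a as [[a1 p] e]. simpl. unfold tr_tgt. simpl.
  symmetry. exact (to_coprod_equivariant e).
Qed.

Lemma to_coprod_arr_idn (p : SGam) :
  to_coprod_arr (@idn (sector_gpd GY Gam) p) =
  @idn (action_gpd (coprod_action Gam Y)) (to_coprod p).
Proof. apply sig_eq. reflexivity. Qed.

Lemma to_coprod_arr_cmp (a b : SecArr) : src a = tgt b ->
  to_coprod_arr (cmp a b) = cmp (to_coprod_arr a) (to_coprod_arr b).
Proof.
  intro e. pose proof (tr_cmp_val (tr_comp_ok e)) as Hcmp. simpl in Hcmp.
  apply sig_eq. rewrite action_cmp_val. simpl. rewrite Hcmp.
  cbn [fst snd]. f_equal. exact (f_equal fst (action_cmp_val _ _)).
Qed.

Lemma to_coprod_arr_inv (a : SecArr) : to_coprod_arr (inv a) = inv (to_coprod_arr a).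
Proof.
  destruct a as [[a1 p] e]. apply sig_eq. simpl. f_equal.
  exact (to_coprod_equivariant e).
Qed.

Lemma to_coprod_arr_continuous :
  finitely_generated Gam ->
  continuous (topArr (sector_gpd GY Gam)) (topArr (action_gpd (coprod_action Gam Y)))
    to_coprod_arr.
Proof.
  intros fg. apply continuous_into_tr_arr; [apply gen_top_is_topology| |].
  - intros U _. exact (tr_open_arrow (A:=sector_action GY Gam) (action_open_group U)).
  - intros W o. exact (tr_open_point (A:=sector_action GY Gam) (to_coprod_continuous fg o)).
Qed.

Lemma of_coprod_arr_continuous :
  is_topology (gsp_top Y) ->
  continuous (topArr (action_gpd (coprod_action Gam Y))) (topArr (sector_gpd GY Gam))
    of_coprod_arr.
Proof.
  intros HY. apply continuous_into_tr_arr; [apply gen_top_is_topology| |].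
  - apply continuous_into_tr_arr; [apply gen_top_is_topology| |].
    + intros U _. exact (action_open_group (Y:=coprod_action Gam Y) U).
    + intros W o. exact (tr_open_point (A:=gpd_action_of_group_action (coprod_action Gam Y))
                       (coprod_open_point o)).
  - intros W o. exact (tr_open_point (A:=gpd_action_of_group_action (coprod_action Gam Y))
                       (of_coprod_continuous HY o)).
Qed.

Lemma to_coprod_arr_homeomorphism :
  is_topology (gsp_top Y) -> finitely_generated Gam ->
  homeomorphism (topArr (sector_gpd GY Gam)) (topArr (action_gpd (coprod_action Gam Y)))
    to_coprod_arr.
Proof.
  intros HY fg. exists of_coprod_arr.
  split; [exact of_to_coprod_arr|split; [exact to_of_coprod_arr|split]].
  - exact (to_coprod_arr_continuous fg).
  - exact (of_coprod_arr_continuous HY).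
Qed.

End Sector.

Theorem mainTheorem5 (G : group) (Y : group_action G) (Gam : group) :
  is_topology (gsp_top Y) ->
  T1_space (gsp_top Y) ->
  continuous (prod_top (discrete_top (X := G)) (gsp_top Y)) (gsp_top Y)
    (fun p => gact Y (fst p) (snd p)) ->
  (forall y : gsp Y, exists l : list G, forall g : G, gact Y g y = y -> In g l) ->
  finitely_generated Gam ->
  top_gpd_iso (sector_gpd (action_gpd Y) Gam)
              (action_gpd (coprod_action Gam Y)).
Proof.
  intros HY _ _ _ fg.
  exists (@to_coprod G Y Gam), (@to_coprod_arr G Y Gam).
  split; [exact (to_coprod_homeomorphism HY fg)|].
  split; [exact (to_coprod_arr_homeomorphism HY fg)|].
  split; [intro a; reflexivity|].
  split; [exact (@to_coprod_arr_tgt G Y Gam)|].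
  split; [exact (@to_coprod_arr_idn G Y Gam)|].
  split; [exact (@to_coprod_arr_cmp G Y Gam)|].
  exact (@to_coprod_arr_inv G Y Gam).
Qed.
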